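(* Let $k$ be a field of characteristic $\neq 2$ and let $\mathfrak f$ be the Lie algebra over $k$ generated by $z_0,z_1,z_2$ subject to the relations, for every $i\in\{0,1,2\}$ with indices taken modulo $3$: $[[z_i,z_{i+1}],z_{i+2}]=0$; $[z_i,[z_i,z_{i+1}]]=z_{i+1}+[z_{i+2},z_i]$; $\bigl[[z_{i+1},[z_{i+1},[z_{i+1},z_i]]],[z_{i+1},z_i]\bigr]=0$. Then for any $i,j\in\{0,1,2\}$ (indices modulo $3$): $[(\mathrm{ad}_{z_i})^2(z_j),z_j]=0$; $\bigl[[z_{i-1},z_i],[z_i,z_{i+1}]\bigr]=z_i$; and $(\mathrm{ad}_{[z_i,z_{i+1}]})^3(z_{i+1})=(\mathrm{ad}_{z_{i+1}})^2(z_i)-(\mathrm{ad}_{z_{i+1}})^4(z_i)$. *)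

From HB Require Import structures.
From mathcomp Require Import all_boot all_order all_algebra.
Set Implicit Arguments. Unset Strict Implicit. Unset Printing Implicit Defensive.
Import GRing.Theory.
Local Open Scope ring_scope.

Definition is_lie_bracket (k : fieldType) (V : lmodType k) (br : V -> V -> V) : Prop :=
  [/\ (forall (a : k) (x y w : V), br (a *: x + y) w = a *: br x w + br y w),
      (forall (a : k) (x y w : V), br w (a *: x + y) = a *: br w x + br w y),
      (forall x : V, br x x = 0)
    & (forall x y w : V, br x (br y w) + br y (br w x) + br w (br x y) = 0)].

Definition ad_pow (V : Type) (br : V -> V -> V) (n : nat) (x y : V) : V :=
  iter n (br x) y.

Definition f_relations (k : fieldType) (V : lmodType k) (br : V -> V -> V)
    (z : 'I_3 -> V) : Prop :=
  forall i : 'I_3,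
    let i1 := ordS i in let i2 := ordS (ordS i) in
    [/\ br (br (z i) (z i1)) (z i2) = 0,
        br (z i) (br (z i) (z i1)) = z i1 + br (z i2) (z i)
      & br (br (z i1) (br (z i1) (br (z i1) (z i)))) (br (z i1) (z i)) = 0].

(* Write a, b, c for z_i, z_(i+1), z_(i+2) and use Jacobi in derivation form
   [u, [x, y]] = [[u, x], y] + [x, [u, y]].  The first two identities follow from
   the quadratic relation [a, [a, b]] = b + [c, a] and the vanishing of triple
   brackets.  For the cubic one put u = ad_b^2 a and v = ad_b^3 a: applying ad_a to
   the third relation [v, [b, a]] = 0 leaves only brackets of u and v with a, c and
   [c, a], which the relations compute: [u, a] = 0, [u, c] = b, [u, [c, a]] = [b, a]
   and [v, [c, a]] = u. *)
From HB Require Import structures.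
From mathcomp Require Import all_boot all_order all_algebra.
Import GRing.Theory.
Local Open Scope ring_scope.

Section LieBracket.
Context {k : fieldType} {V : lmodType k} {br : V -> V -> V}.
Hypothesis hbr : is_lie_bracket br.
Local Notation "[ x , y ]" := (br x y).

Lemma lieDl x y w : [x + y, w] = [x, w] + [y, w].
Proof. by case: hbr => linl _ _ _; rewrite -[x]scale1r linl !scale1r. Qed.

Lemma lieDr x y w : [w, x + y] = [w, x] + [w, y].
Proof. by case: hbr => _ linr _ _; rewrite -[x]scale1r linr !scale1r. Qed.

Lemma liexx x : [x, x] = 0.
Proof. by case: hbr. Qed.

Lemma lie0l w : [0, w] = 0.
Proof. by apply: (@addrI _ [0, w]); rewrite -lieDl !addr0. Qed.

Lemma lie0r w : [w, 0] = 0.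
Proof. by apply: (@addrI _ [w, 0]); rewrite -lieDr !addr0. Qed.

Lemma lieNl x w : [- x, w] = - [x, w].
Proof. by apply: (@addrI _ [x, w]); rewrite -lieDl !subrr lie0l. Qed.

Lemma lieNr x w : [w, - x] = - [w, x].
Proof. by apply: (@addrI _ [w, x]); rewrite -lieDr !subrr lie0r. Qed.

Lemma lieC x y : [x, y] = - [y, x].
Proof.
apply/eqP; rewrite -addr_eq0; apply/eqP.
by have := liexx (x + y); rewrite lieDl !lieDr !liexx add0r addr0.
Qed.

Lemma lie_derivation u x y : [u, [x, y]] = [[u, x], y] + [x, [u, y]].
Proof.
case: hbr => _ _ _ /(_ u x y) jacobi.
rewrite (lieC y u) lieNr (lieC y) -addrA -opprD in jacobi.
by rewrite addrC; apply/eqP; rewrite -subr_eq0 jacobi.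
Qed.

Section ThreeGenerators.
Context {a b c : V}.
Hypothesis ab_c : [[a, b], c] = 0.
Hypothesis bc_a : [[b, c], a] = 0.
Hypothesis ca_b : [[c, a], b] = 0.
Hypothesis ad2_ab : [a, [a, b]] = b + [c, a].
Hypothesis ad2_bc : [b, [b, c]] = c + [a, b].
Hypothesis ad3_ba_ba : [[b, [b, [b, a]]], [b, a]] = 0.

Lemma b_ca : [b, [c, a]] = 0.
Proof. by rewrite lieC ca_b oppr0. Qed.

Lemma ad2_ab_b : [[a, [a, b]], b] = 0.
Proof. by rewrite ad2_ab lieDl liexx add0r ca_b. Qed.

Lemma ad2_ba_a : [[b, [b, a]], a] = 0.
Proof.
have ba_a : [[b, a], a] = b + [c, a] by rewrite lieC -lieNr -lieC ad2_ab.
have := lie_derivation b [b, a] a.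
by rewrite ba_a liexx addr0 lieDr liexx b_ca add0r.
Qed.

Lemma lie_adjacent_commutators : [[a, b], [b, c]] = b.
Proof.
rewrite lieC lie_derivation bc_a lie0l add0r (lieC _ b) lieNr ad2_bc opprK.
by rewrite lieDr ad2_ab (lieC a c) addrCA addNr addr0.
Qed.

Lemma ad2_ba_c : [[b, [b, a]], c] = b.
Proof.
have ba_c : [[b, a], c] = 0 by rewrite (lieC b a) lieNl ab_c oppr0.
have ba_bc : [[b, a], [b, c]] = - b.
  by rewrite (lieC b a) lieNl lie_adjacent_commutators.
have := lie_derivation b [b, a] c; rewrite ba_c lie0r ba_bc.
by move=> /esym/eqP; rewrite subr_eq0 => /eqP.
Qed.

Lemma ad2_ba_ca : [[b, [b, a]], [c, a]] = [b, a].
Proof. by rewrite lie_derivation ad2_ba_c ad2_ba_a lie0r addr0. Qed.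

Lemma ad3_ba_ca : [[b, [b, [b, a]]], [c, a]] = [b, [b, a]].
Proof.
have := lie_derivation b [b, [b, a]] [c, a].
by rewrite ad2_ba_ca b_ca lie0r addr0.
Qed.

Lemma ad3_ba_a : [[b, [b, [b, a]]], a] = - [[b, [b, a]], [b, a]].
Proof.
have := lie_derivation b [b, [b, a]] a; rewrite ad2_ba_a lie0r.
by move=> /esym/eqP; rewrite addr_eq0 => /eqP.
Qed.

Lemma ad2_ba_ba_ba :
  [[[b, [b, a]], [b, a]], [b, a]] = [b, [b, a]] - [b, [b, [b, [b, a]]]].
Proof.
have a_ad3 : [a, [b, [b, [b, a]]]] = [[b, [b, a]], [b, a]].
  by rewrite lieC ad3_ba_a opprK.
have a_ba : [a, [b, a]] = - (b + [c, a]) by rewrite (lieC b a) lieNr ad2_ab.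
have := congr1 (br a) ad3_ba_ba.
rewrite lie0r lie_derivation a_ad3 a_ba lieNr lieDr ad3_ba_ca (lieC _ b).
by move/eqP; rewrite subr_eq0 addrC => /eqP.
Qed.

Lemma ad3_ab_b :
  [[a, b], [[a, b], [[a, b], b]]] = [b, [b, a]] - [b, [b, [b, [b, a]]]].
Proof.
rewrite -ad2_ba_ba_ba (lieC a b) !lieNl lieNr opprK -(lieC b).
by rewrite (lieC [b, a] [[b, a], _]) (lieC [b, a] [b, [b, a]]) lieNl opprK.
Qed.

End ThreeGenerators.

Definition rotated_relations (a b c : V) : Prop :=
  [/\ [/\ [[a, b], c] = 0, [[b, c], a] = 0 & [[c, a], b] = 0],
      [a, [a, b]] = b + [c, a], [b, [b, c]] = c + [a, b]
    & [[b, [b, [b, a]]], [b, a]] = 0].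

End LieBracket.

Arguments rotated_relations {k V} br a b c.

Lemma ordSSS (i : 'I_3) : ordS (ordS (ordS i)) = i.
Proof. by apply/val_inj; case: i => [[|[|[|?]]] ?]. Qed.

Lemma ord3_cases (i j : 'I_3) : [|| j == i, j == ordS i | i == ordS j].
Proof. by case: i j => [[|[|[|?]]] ?] [[|[|[|?]]] ?]. Qed.

Lemma f_relations_rotated {k : fieldType} {V : lmodType k} {br : V -> V -> V}
    {z : 'I_3 -> V} (hz : f_relations br z) (i : 'I_3) :
  rotated_relations br (z i) (z (ordS i)) (z (ordS (ordS i))).
Proof.
have [abc ab R3] := hz i; have [bca bc _] := hz (ordS i).
have [cab _ _] := hz (ordS (ordS i)).
by rewrite ordSSS in bca bc cab; split.
Qed.

Theorem lemma5p1 (k : fieldType) (hk : (2%:R : k) != 0)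
    (V : lmodType k) (br : V -> V -> V) (hbr : is_lie_bracket br)
    (z : 'I_3 -> V) (hz : f_relations br z) :
  [/\ (forall i j : 'I_3, br (ad_pow br 2 (z i) (z j)) (z j) = 0),
      (forall i : 'I_3,
         br (br (z (ord_pred i)) (z i)) (br (z i) (z (ordS i))) = z i)
    & (forall i : 'I_3,
         ad_pow br 3 (br (z i) (z (ordS i))) (z (ordS i))
         = ad_pow br 2 (z (ordS i)) (z i) - ad_pow br 4 (z (ordS i)) (z i))].
Proof.
(* [hk] is unused: no step divides by 2. *)
split=> [i j | i | i]; rewrite /ad_pow /=.
- case/or3P: (ord3_cases i j) => /eqP ->.
  + by rewrite (liexx hbr) (lie0r hbr) (lie0l hbr).
  + have [[_ _ cab] ab _ _] := f_relations_rotated hz i.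
    exact: (ad2_ab_b hbr cab ab).
  + have [[_ _ cab] ab _ _] := f_relations_rotated hz j.
    exact: (ad2_ba_a hbr cab ab).
- have := f_relations_rotated hz (ord_pred i).
  rewrite ord_predK => -[[_ bca _] ab bc _].
  exact: (lie_adjacent_commutators hbr bca ab bc).
- have [[abc bca cab] ab bc R3] := f_relations_rotated hz i.
  exact: (ad3_ab_b hbr abc bca cab ab bc R3).
Qed.
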